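(* Let $b=(b_n)$, $b_n:\{0,1\}^n\to\{0,1\}^{n+1}$, be a demi-bit and let $0<c<1$ be a constant. Define the generator $g$ on inputs of length $N$ as follows: let $m=\lceil N^c\rceil$ and $n=\lfloor N/m\rfloor$, write the input as $x=x_1x_2\cdots x_m r$ with $|x_i|=n$ for each $i$ (and $r$ the remaining $N-mn$ bits), and set $g(x)=b_n(x_1)\,b_n(x_2)\cdots b_n(x_m)\,r\in\{0,1\}^{N+m}$. Then $g$ has at least exponential demi-hardness: there is $\epsilon>0$ such that $H_{\mathrm{dh}}(g_N)\ge 2^{N^\epsilon}$ for all sufficiently large $N$, i.e. $g$ is $\lceil N^c\rceil$ demi-bits.
   Context: A generator is a family $g_n:\{0,1\}^n\to\{0,1\}^{l(n)}$ computable by polynomial-size (nonuniform) circuits with $l(n)>n$. A nondeterministic circuit $D(x,w)$ accepts input $x$ (written $D(x)=1$) iff there is an assignment to the nondeterministic input bits $w$ with $D(x,w)=1$. The demi-hardness $H_{\mathrm{dh}}(g_n)$ is the minimal $s$ such that some nondeterministic circuit $D$ of size at most $s$ satisfies $\Pr_{y\in\{0,1\}^{l(n)}}[D(y)=1]\ge 1/s$ and $\Pr_{x\in\{0,1\}^n}[D(g_n(x))=1]=0$ (uniform distributions). A generator $g_n:\{0,1\}^n\to\{0,1\}^{n+k(n)}$ is $k$ demi-bits if there is $\epsilon>0$ with $H_{\mathrm{dh}}(g_n)\ge 2^{n^\epsilon}$ for all sufficiently large $n$; a demi-bit is the case $k=1$. *)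

From Stdlib Require Import Reals.
From mathcomp Require Import all_boot.

Set Implicit Arguments.
Unset Strict Implicit.
Unset Printing Implicit Defensive.

(* A gate refers to input bits (GIn i) or to EARLIER gates by index.
   References to non-existing wires read as [false]. *)
Inductive gate : Type :=
| GConst of bool
| GIn of nat
| GNot of nat
| GAnd of nat & nat
| GOr of nat & nat.

Definition gate_val (x vals : seq bool) (g : gate) : bool :=
  match g with
  | GConst b => b
  | GIn i => nth false x i
  | GNot j => ~~ nth false vals j
  | GAnd j k => nth false vals j && nth false vals k
  | GOr j k => nth false vals j || nth false vals k
  end.

Definition eval_gates (x : seq bool) (gs : seq gate) : seq bool :=
  foldl (fun vals g => rcons vals (gate_val x vals g)) [::] gs.

Record mcircuit := MCircuit { mc_gates : seq gate; mc_out : seq nat }.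
Definition mc_size (C : mcircuit) : nat := size (mc_gates C).
Definition mc_eval (C : mcircuit) (x : seq bool) : seq bool :=
  map (nth false (eval_gates x (mc_gates C))) (mc_out C).

(* nondeterministic single-output circuit D(x,w): input x ++ w,
   output = value of the last gate; size = number of gates *)
Record ndcircuit := NDCircuit { nd_wit : nat; nd_gates : seq gate }.
Definition nd_size (D : ndcircuit) : nat := size (nd_gates D).
Definition nd_accepts (D : ndcircuit) (x : seq bool) : bool :=
  [exists w : (nd_wit D).-tuple bool,
     last false (eval_gates (x ++ tval w) (nd_gates D))].

(* g n is the n-th member, applied to inputs of length n *)
Definition bitfam := nat -> seq bool -> seq bool.

Definition has_out_len (g : bitfam) (l : nat -> nat) : Prop :=
  forall n (x : n.-tuple bool), size (g n x) = l n.

Definition poly_size_computable (g : bitfam) : Prop :=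
  exists k : nat, forall n, exists C : mcircuit,
    (mc_size C <= n ^ k + k)%N /\
    forall x : n.-tuple bool, mc_eval C x = g n x.

(* H_dh(g_n) >= T, where the outputs of g_n have length l:
   every nondeterministic circuit D of size <= s with
   Pr_y[D(y)=1] >= 1/s (y uniform in {0,1}^l) and
   Pr_x[D(g_n(x))=1] = 0 satisfies T <= s. *)
Definition dh_ge (g : bitfam) (n l : nat) (T : R) : Prop :=
  forall (s : nat) (D : ndcircuit),
    (nd_size D <= s)%N ->
    (2 ^ l <= s * #|[set y : l.-tuple bool | nd_accepts D y]|)%N ->
    (forall x : n.-tuple bool, ~~ nd_accepts D (g n x)) ->
    Rle T (INR s).

Definition demibits (k : nat -> nat) (g : bitfam) : Prop :=
  has_out_len g (fun n => n + k n)%N /\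
  poly_size_computable g /\
  exists eps : R, Rlt R0 eps /\
    exists N0 : nat, forall n, (N0 <= n)%N ->
      dh_ge g n (n + k n)%N (Rpower (INR 2) (Rpower (INR n) eps)).

(* x ^ c for x >= 0, with 0 ^ c = 0 *)
Definition nat_rpow (N : nat) (c : R) : R :=
  if N == 0%N then R0 else Rpower (INR N) c.

(* ceiling of a real, as a nat (Int_part = floor) *)
Definition ceil_nat (x : R) : nat := Z.to_nat (- Int_part (- x))%Z.

Definition blocks (c : R) (N : nat) : nat := ceil_nat (nat_rpow N c).

Definition concat_gen (b : bitfam) (c : R) : bitfam :=
  fun N x =>
    let m := blocks c N in
    let n := (N %/ m)%N in
    flatten [seq b n (take n (drop (i * n) x)) | i <- iota 0 m]
      ++ drop (m * n) x.

(* The proof is a hybrid argument.  Let [m = blocks c N], [n = N / m], and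
   suppose a nondeterministic circuit [D] of size [s] accepts a [1/s]
   fraction of all strings of length [N + m] but no output of [concat_gen].
   For [j <= m] let [phi_j] accept [z] iff [D] accepts [b(x_1) ... b(x_j) z]
   for some [x_1 ... x_j]; guessing the [x_i] nondeterministically, [phi_j]
   has a circuit of size [s + j |C|], where [C] computes [b_n].  Since [phi_0]
   is dense and [phi_m] accepts nothing, some step [j] and some suffix [z]
   rejected by [phi_(j+1)] make [y |-> phi_j (y ++ z)] accept a [1/(2 s m)]
   fraction of [{0,1}^(n+1)] while rejecting every [b_n(x)]: a breaker of
   [b_n] of size polynomial in [N] times [s].  As [n >= N^(1-c) / 4], the
   hardness [2^(n^eps)] of [b] forces [s >= 2^(N^((1-c) eps / 2))]. *)

From Stdlib Require Import Reals Lra ZArith Classical_Prop.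
From mathcomp Require Import all_boot zify.

Set Implicit Arguments.
Unset Strict Implicit.
Unset Printing Implicit Defensive.

Lemma eval_gates_rcons x gs g :
  eval_gates x (rcons gs g) = rcons (eval_gates x gs) (gate_val x (eval_gates x gs) g).
Proof. by rewrite /eval_gates foldl_rcons. Qed.

Lemma size_eval_gates x gs : size (eval_gates x gs) = size gs.
Proof.
elim/last_ind: gs => [//|gs g IH].
by rewrite eval_gates_rcons !size_rcons IH.
Qed.

Definition reloc (P : nat) (inp : nat -> gate) (g : gate) : gate :=
  match g with
  | GConst b => GConst b
  | GIn i => inp i
  | GNot j => GNot (P + j)
  | GAnd j k => GAnd (P + j) (P + k)
  | GOr j k => GOr (P + j) (P + k)
  end.

Lemma eval_reloc x v pre gs inp :
  (forall i vs, gate_val x (eval_gates x pre ++ vs) (inp i) = nth false v i) ->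
  eval_gates x (pre ++ map (reloc (size pre) inp) gs) = eval_gates x pre ++ eval_gates v gs.
Proof.
move=> Hinp; elim/last_ind: gs => [|gs g IH]; first by rewrite /= !cats0.
rewrite map_rcons -rcons_cat !eval_gates_rcons IH -rcons_cat; congr (rcons _ _).
have Hs : size (eval_gates x pre) = size pre by rewrite size_eval_gates.
case: g => [b|i|j|j k|j k] //=; rewrite ?nth_cat Hs ?ltnNge ?leq_addr /= ?addKn //.
Qed.

(* A nondeterministic circuit running the prefix [pre] and then [E] relocated
   with inputs [inp], with [w'] witness bits.  (An empty [E] stays empty, since
   its output is the constant [false] either way.) *)
Definition nd_reloc (E : ndcircuit) (pre : seq gate) (inp : nat -> gate) (w' : nat) :=
  NDCircuit w' (if nd_gates E is [::] then [::]
                else pre ++ map (reloc (size pre) inp) (nd_gates E)).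

Lemma last_nd_reloc E pre inp w' x v :
  (forall i vs, gate_val x (eval_gates x pre ++ vs) (inp i) = nth false v i) ->
  last false (eval_gates x (nd_gates (nd_reloc E pre inp w'))) =
  last false (eval_gates v (nd_gates E)).
Proof.
move=> H; rewrite /nd_reloc /=; case Eg: (nd_gates E) => [//|g gs].
rewrite -Eg (eval_reloc (nd_gates E) H) last_cat.
have : 0 < size (eval_gates v (nd_gates E)) by rewrite size_eval_gates Eg.
by case: (eval_gates v (nd_gates E)).
Qed.

Lemma nd_size_reloc E pre inp w' : nd_size (nd_reloc E pre inp w') <= size pre + nd_size E.
Proof.
rewrite /nd_size /nd_reloc /=; case: (nd_gates E) => [//|g gs].
by rewrite size_cat size_map.
Qed.

Lemma exists_tuple_cat a b (P : seq bool -> bool) :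
  [exists w : (a + b).-tuple bool, P w] =
  [exists x : a.-tuple bool, exists w : b.-tuple bool, P (x ++ w)].
Proof.
apply/existsP/existsP => [[w Hw]|[x /existsP [w Hw]]].
- have H1 : size (take a w) == a by rewrite size_takel // size_tuple leq_addr.
  have H2 : size (drop a w) == b by rewrite size_drop size_tuple addKn.
  exists (Tuple H1); apply/existsP; exists (Tuple H2) => /=.
  by rewrite cat_take_drop.
- by exists (cat_tuple x w).
Qed.

Definition restrict_input (a : nat) (z0 : seq bool) (k : nat) : gate :=
  if k < a then GIn k
  else if k < a + size z0 then GConst (nth false z0 (k - a))
  else GIn (k - size z0).

Definition restrict (a : nat) (z0 : seq bool) (E : ndcircuit) : ndcircuit :=
  nd_reloc E [::] (restrict_input a z0) (nd_wit E).

Lemma accepts_restrict a z0 E y :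
  size y = a -> nd_accepts (restrict a z0 E) y = nd_accepts E (y ++ z0).
Proof.
move=> Hy; rewrite /nd_accepts; apply: eq_existsb => w.
apply: last_nd_reloc => i vs; rewrite /restrict_input -catA.
case: ifP => H1 /=; first by rewrite !nth_cat Hy H1.
case: ifP => H2 /=.
- by rewrite nth_cat Hy H1 nth_cat; have -> : i - a < size z0 by lia.
- rewrite [RHS]nth_cat Hy H1 [RHS]nth_cat nth_cat Hy.
  have -> : i - a < size z0 = false by lia.
  have -> : i - size z0 < a = false by lia.
  congr nth; lia.
Qed.

Lemma size_restrict a z0 E : nd_size (restrict a z0 E) <= nd_size E.
Proof. exact: nd_size_reloc. Qed.

(* For a circuit [C] mapping [n] bits to [o]
   bits, [prepend n o l C E] reads [z] of length [l], guesses [x] of length [n]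
   (as extra witness bits) and accepts iff [E] accepts [C(x) ++ z].  On the
   input [z ++ x ++ w] it first runs [C] on [x], then [E] on [C(x) ++ z ++ w]. *)
Definition prepend_gates (n l : nat) (C : mcircuit) : seq gate :=
  map (reloc 0 (fun a => if a < n then GIn (l + a) else GConst false)) (mc_gates C).

Definition prepend_input (n o l : nat) (C : mcircuit) (k : nat) : gate :=
  if k < o then
    (let g := nth 0 (mc_out C) k in
     (* [GAnd g g] copies wire [g]; a dangling output wire reads [false] *)
     if g < size (mc_gates C) then GAnd g g else GConst false)
  else if k < o + l then GIn (k - o) else GIn (k + n - o).

Definition prepend (n o l : nat) (C : mcircuit) (E : ndcircuit) : ndcircuit :=
  nd_reloc E (prepend_gates n l C) (prepend_input n o l C) (n + nd_wit E).

Lemma eval_prepend_gates n l C z (x : n.-tuple bool) w :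
  size z = l ->
  eval_gates (z ++ x ++ w) (prepend_gates n l C) = eval_gates x (mc_gates C).
Proof.
move=> Hz; rewrite /prepend_gates.
rewrite (@eval_reloc (z ++ x ++ w) x [::]) // => i vs /=.
case: ifP => Hi /=.
- by rewrite nth_cat Hz ltnNge leq_addr /= addKn nth_cat size_tuple Hi.
- by rewrite nth_default // size_tuple leqNgt Hi.
Qed.

Lemma accepts_prepend n o l C E z :
  size z = l ->
  (forall x : n.-tuple bool, size (mc_eval C x) = o) ->
  nd_accepts (prepend n o l C E) z =
  [exists x : n.-tuple bool, nd_accepts E (mc_eval C x ++ z)].
Proof.
move=> Hz Hsz; rewrite /nd_accepts [nd_wit _]/=.
rewrite (exists_tuple_cat _ _
  (fun s => last false (eval_gates (z ++ s) (nd_gates (prepend n o l C E))))).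
apply: eq_existsb => x; apply: eq_existsb => w.
apply: last_nd_reloc => i vs.
rewrite eval_prepend_gates // /prepend_input -catA.
have Hx := Hsz x.
case: ifP => Hi1.
- have Ho : i < size (mc_out C).
    by move: Hi1; rewrite -Hx /mc_eval size_map.
  rewrite nth_cat Hx Hi1 /mc_eval (nth_map 0) //.
  case: ifP => Ho2 /=.
  + by rewrite nth_cat size_eval_gates Ho2 andbb.
  + by rewrite nth_default // size_eval_gates leqNgt Ho2.
- rewrite [RHS]nth_cat Hx Hi1 [RHS]nth_cat Hz.
  case: ifP => Hi2 /=.
  + by rewrite nth_cat Hz; have -> : i - o < l by lia.
  + have -> : i - o < l = false by lia.
    rewrite nth_cat Hz.
    have -> : i + n - o < l = false by lia.
    rewrite nth_cat size_tuple.
    have -> : i + n - o - l < n = false by lia.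
    congr nth; lia.
Qed.

Lemma size_prepend n o l C E :
  nd_size (prepend n o l C E) <= size (mc_gates C) + nd_size E.
Proof. by have := nd_size_reloc E (prepend_gates n l C) (prepend_input n o l C) (n + nd_wit E); rewrite size_map. Qed.

Fixpoint allseqs (a : nat) : seq (seq bool) :=
  if a is a'.+1 then [seq false :: t | t <- allseqs a'] ++ [seq true :: t | t <- allseqs a']
  else [:: [::]].

Definition cnt (a : nat) (F : seq bool -> nat) : nat := \sum_(u <- allseqs a) F u.

Lemma mem_allseqs a u : (u \in allseqs a) = (size u == a).
Proof.
elim: a u => [|a IH] [|h t] //=.
- by rewrite mem_cat; apply/negP => /orP [] /mapP [].
- rewrite mem_cat eqSS -IH.
  apply/idP/idP => [/orP [] /mapP [t' Ht' [_ ->]] //|Ht].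
  by case: h; apply/orP; [right|left]; apply/mapP; exists t.
Qed.

Lemma uniq_allseqs a : uniq (allseqs a).
Proof.
elim: a => [//|a IH] /=.
rewrite cat_uniq !map_inj_uniq ?IH //=; try by move=> x y [->].
by rewrite andbT; apply/hasPn => u /mapP [t _ ->]; apply/mapP => -[t' _ []].
Qed.

Lemma card_cnt a (P : seq bool -> bool) :
  #|[set y : a.-tuple bool | P y]| = cnt a (fun u => P u).
Proof.
rewrite cardsE -sum1_card big_mkcond /= /cnt.
have -> : \sum_(i : a.-tuple bool) (if P i then 1 else 0)
       = \sum_(u <- map val (index_enum (a.-tuple bool))) (P u : nat).
  by rewrite big_map; apply: eq_bigr => i _; case: (P i).
apply: perm_big; apply: uniq_perm.
- by rewrite map_inj_uniq ?index_enum_uniq //; exact: val_inj.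
- exact: uniq_allseqs.
- move=> u; rewrite mem_allseqs; apply/mapP/idP => [[t _ ->]|Hu].
  + by rewrite size_tuple.
  + by exists (Tuple Hu); rewrite ?mem_index_enum.
Qed.

Lemma cnt_le a F G : (forall u, size u = a -> F u <= G u) -> cnt a F <= cnt a G.
Proof.
move=> H; rewrite /cnt big_seq_cond [X in _ <= X]big_seq_cond.
by apply: leq_sum => u /andP [Hu _]; apply: H; apply/eqP; rewrite -mem_allseqs.
Qed.

Lemma eq_cnt a F G : (forall u, size u = a -> F u = G u) -> cnt a F = cnt a G.
Proof. by move=> H; apply/eqP; rewrite eqn_leq !cnt_le // => u /H ->. Qed.

Lemma cnt_add a F G : cnt a (fun u => F u + G u) = cnt a F + cnt a G.
Proof. by rewrite /cnt big_split. Qed.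

Lemma cnt_mull a k F : cnt a (fun u => k * F u) = k * cnt a F.
Proof. by rewrite /cnt big_distrr. Qed.

Lemma cntS a F : cnt a.+1 F = cnt a (fun t => F (false :: t)) + cnt a (fun t => F (true :: t)).
Proof. by rewrite /cnt /= big_cat !big_map. Qed.

Lemma cnt_cat a b F : cnt (a + b) F = cnt b (fun z => cnt a (fun y => F (y ++ z))).
Proof.
elim: a F => [|a IH] F.
- by rewrite add0n /cnt; apply: eq_bigr => z _; rewrite /= big_seq1.
- rewrite addSn cntS !IH /cnt -big_split /=; apply: eq_bigr => z _.
  by rewrite big_cat !big_map.
Qed.

Lemma cnt_const a k : cnt a (fun _ => k) = k * 2 ^ a.
Proof.
elim: a => [|a IH]; first by rewrite /cnt big_seq1 muln1.
by rewrite cntS IH expnS; lia.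
Qed.

Lemma hybrid_step a l (P Q : seq bool -> bool) K :
  (forall z, size z = l -> Q z = false -> K * cnt a (fun y => P (y ++ z)) < 2 ^ a) ->
  K * cnt (a + l) (fun u => P u) <= K * 2 ^ a * cnt l (fun z => Q z) + 2 ^ (a + l).
Proof.
move=> Hbad.
have -> : K * 2 ^ a * cnt l (fun z => Q z) + 2 ^ (a + l) =
          cnt l (fun z => K * 2 ^ a * Q z + 2 ^ a).
  by rewrite cnt_add cnt_mull cnt_const expnD mulnC.
rewrite cnt_cat -cnt_mull; apply: cnt_le => z Hz.
case Hq: (Q z); last by rewrite muln0 add0n ltnW // Hbad.
rewrite muln1; apply: leq_trans (leq_addr (2 ^ a) _); rewrite leq_mul2l.
apply/orP; right; rewrite -[2 ^ a]mul1n -cnt_const.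
by apply: cnt_le => y _; case: (P _).
Qed.

Lemma telescope (f : nat -> nat) e m :
  (forall j, j < m -> f j <= f j.+1 + e) -> f 0 <= f m + m * e.
Proof.
elim: m => [|m IH] H; first by rewrite addn0.
apply: leq_trans (IH (fun j Hj => H j (ltnW Hj))) _.
have := H m (ltnSn m); rewrite mulSn; lia.
Qed.

Lemma hybrid (phi : nat -> seq bool -> bool) a r m s :
  0 < m ->
  (forall z, size z = r -> phi m z = false) ->
  2 ^ (m * a + r) <= s * cnt (m * a + r) (fun u => phi 0 u) ->
  exists j, j < m /\ exists z, size z = (m - j.+1) * a + r /\ phi j.+1 z = false /\
     2 ^ a <= 2 * s * m * cnt a (fun y => phi j (y ++ z)).
Proof.
move=> Hm Hlast Hfirst; set K := 2 * s * m.
apply: NNPP => Hnone.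
have Hbad j z : j < m -> size z = (m - j.+1) * a + r -> phi j.+1 z = false ->
    K * cnt a (fun y => phi j (y ++ z)) < 2 ^ a.
  move=> Hj Hz Hp; rewrite ltnNge; apply/negP => Hge; apply: Hnone.
  by exists j; split => //; exists z.
set L := m * a + r.
(* [alpha j] scales the count of [phi j] to the common length [L]; each step
   loses at most [2^L] by [hybrid_step], while [alpha 0 >= 2 m 2^L] and [alpha m = 0]. *)
pose alpha j := K * (cnt ((m - j) * a + r) (fun u => phi j u) * 2 ^ (j * a)).
have Hstep j : j < m -> alpha j <= alpha j.+1 + 2 ^ L.
  move=> Hj.
  have Ej : (m - j) * a + r = a + ((m - j.+1) * a + r).
    have -> : m - j = (m - j.+1).+1 by lia.
    by rewrite mulSn addnA.
  have := hybrid_step (fun z => Hbad j z Hj); rewrite -Ej => Hs.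
  have EL : 2 ^ ((m - j) * a + r) * 2 ^ (j * a) = 2 ^ L.
    by rewrite -expnD addnAC -mulnDl subnK // ltnW.
  have E1 : 2 ^ (j.+1 * a) = 2 ^ a * 2 ^ (j * a) by rewrite mulSn expnD.
  rewrite /alpha E1 -EL; have := leq_mul Hs (leqnn (2 ^ (j * a))); nia.
have Hend : alpha m = 0.
  rewrite /alpha subnn mul0n add0n.
  have -> : cnt r (fun u => phi m u) = cnt r (fun _ => 0).
    by apply: eq_cnt => u /Hlast ->.
  by rewrite cnt_const !mul0n muln0.
have := telescope Hstep; rewrite Hend add0n /alpha subn0 mul0n expn0 muln1 -/L.
have HL : 0 < 2 ^ L by rewrite expn_gt0.
move: Hfirst; rewrite -/L /K; nia.
Qed.

Lemma size_flatten_const (T : eqType) (s : seq T) (f : T -> seq bool) k :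
  (forall i, i \in s -> size (f i) = k) -> size (flatten (map f s)) = k * size s.
Proof.
elim: s => [|i s IH] H /=; first by rewrite muln0.
rewrite size_cat H ?mem_head // IH ?mulnS // => j Hj.
by apply: H; rewrite inE Hj orbT.
Qed.

Lemma map_blocks (F : seq bool -> seq bool) n (xs : seq (seq bool)) r :
  all (fun x => size x == n) xs ->
  [seq F (take n (drop (i * n) (flatten xs ++ r))) | i <- iota 0 (size xs)] = map F xs.
Proof.
elim: xs => [//|x xs IH] /= /andP [/eqP Hx Hall].
rewrite mul0n drop0 -catA take_size_cat //; congr cons.
have -> : iota 1 (size xs) = map (addn 1) (iota 0 (size xs)) by rewrite -iotaDl.
rewrite -(IH Hall) -map_comp; apply: eq_map => i /=.
by rewrite add1n mulSn [n + _]addnC -drop_drop drop_size_cat.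
Qed.

Lemma drop_blocks n (xs : seq (seq bool)) r :
  all (fun x => size x == n) xs -> drop (size xs * n) (flatten xs ++ r) = r.
Proof.
elim: xs => [|x xs IH] /=; first by rewrite drop0.
move=> /andP [/eqP Hx Hall]; rewrite mulSn [n + _]addnC -drop_drop -catA drop_size_cat //.
exact: IH.
Qed.

Lemma concat_gen_blocks b c N (xs : seq (seq bool)) r n :
  all (fun x => size x == n) xs -> size xs = blocks c N -> N %/ blocks c N = n ->
  concat_gen b c N (flatten xs ++ r) = flatten (map (b n) xs) ++ r.
Proof.
move=> Hall Hs Hn; rewrite /concat_gen /= Hn -Hs map_blocks //.
by rewrite drop_blocks.
Qed.

Lemma size_concat_gen b c N x :
  (forall u, size u = N %/ blocks c N -> size (b (N %/ blocks c N) u) = N %/ blocks c N + 1) ->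
  size x = N -> size (concat_gen b c N x) = N + blocks c N.
Proof.
move=> Hb Hx; rewrite /concat_gen /=.
set m := blocks c N; set n := N %/ m.
have Hmn : m * n <= N by rewrite mulnC leq_divM.
rewrite size_cat size_drop Hx (@size_flatten_const _ _ _ (n + 1)); last first.
  move=> i; rewrite mem_iota add0n => /andP [_ Hi]; apply: Hb.
  rewrite size_takel // size_drop Hx.
  have : i.+1 * n <= m * n by rewrite leq_mul2r Hi orbT.
  rewrite mulSn; lia.
rewrite size_iota mulnDl mul1n; lia.
Qed.

Section Asymptotics.
Local Open Scope R_scope.

Lemma INR_le_ssr (a b : nat) : (a <= b)%N -> INR a <= INR b.
Proof. by move=> /leP; apply: le_INR. Qed.

Lemma INR_addn a b : INR (a + b)%N = INR a + INR b.
Proof. by rewrite addnE plus_INR. Qed.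

Lemma INR_muln a b : INR (a * b)%N = INR a * INR b.
Proof. by rewrite mulnE mult_INR. Qed.

Lemma INR_expn a b : INR (a ^ b)%N = INR a ^ b.
Proof. by elim: b => [//|b IH]; rewrite expnS INR_muln IH. Qed.

Lemma ceil_nat_spec x : 0 <= x -> x <= INR (ceil_nat x) < x + 1.
Proof.
move=> Hx; rewrite /ceil_nat.
have [H1 H2] := base_Int_part (- x).
have Hz : (0 <= - Int_part (- x))%Z by apply: le_IZR; rewrite opp_IZR; lra.
rewrite INR_IZR_INZ Z2Nat.id // opp_IZR; lra.
Qed.

Lemma blocks_spec c N : 0 < c < 1 -> (0 < N)%N ->
  1 <= Rpower (INR N) c <= INR N /\
  Rpower (INR N) c <= INR (blocks c N) < Rpower (INR N) c + 1.
Proof.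
move=> Hc HN.
have HX : 1 <= INR N by apply: (INR_le_ssr HN).
have E : nat_rpow N c = Rpower (INR N) c by rewrite /nat_rpow; case: N HN {HX}.
have Hlo : 1 <= Rpower (INR N) c.
  by rewrite -(Rpower_O (INR N)); [apply: Rle_Rpower|]; lra.
have Hhi : Rpower (INR N) c <= INR N.
  by rewrite -{2}(Rpower_1 (INR N)); [apply: Rle_Rpower|]; lra.
by split; [|rewrite /blocks E; apply: ceil_nat_spec]; lra.
Qed.

Lemma blocks0 c : blocks c 0 = 0%N.
Proof.
rewrite /blocks /nat_rpow /= /ceil_nat.
have [H1 H2] := base_Int_part (- R0).
have Ha : (Int_part (- R0) <= 0)%Z by apply: le_IZR; lra.
have Hb : (-1 < Int_part (- R0))%Z by apply: lt_IZR; lra.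
by have -> : Int_part (- R0) = 0%Z by lia.
Qed.

Lemma blocks_le c N : 0 < c < 1 -> (blocks c N <= N)%N.
Proof.
move=> Hc; case: N => [|N]; first by rewrite blocks0.
have [[H1 H2] [H3 H4]] := blocks_spec Hc (ltn0Sn N).
have : INR (blocks c N.+1) < INR N.+2 by rewrite (S_INR N.+1); lra.
by move/INR_lt/ltP.
Qed.

Lemma blocks_gt0 c N : 0 < c < 1 -> (0 < N)%N -> (0 < blocks c N)%N.
Proof.
move=> Hc HN; have [[H1 H2] [H3 H4]] := blocks_spec Hc HN.
have : INR 0 < INR (blocks c N) by rewrite /=; lra.
by move/INR_lt/ltP.
Qed.

Lemma block_length_lower c N : 0 < c < 1 -> (0 < N)%N ->
  Rpower (INR N) (1 - c) < 2 * (INR (N %/ blocks c N) + 1).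
Proof.
move=> Hc HN.
have Hm := blocks_gt0 Hc HN.
have [[HXc1 HXcX] [HMlo HMhi]] := blocks_spec Hc HN.
have Hsplit : Rpower (INR N) (1 - c) * Rpower (INR N) c = INR N.
  rewrite -Rpower_plus; have -> : 1 - c + c = 1 by ring.
  by rewrite Rpower_1 //; apply: (lt_INR 0); apply/ltP.
have Hceil : INR N < (INR (N %/ blocks c N) + 1) * INR (blocks c N).
  rewrite -S_INR -mult_INR; apply: lt_INR; apply/ltP; exact: ltn_ceil.
have Hn := pos_INR (N %/ blocks c N).
apply: (Rmult_lt_reg_r (Rpower (INR N) c)); first lra.
rewrite Hsplit; apply: Rlt_le_trans Hceil _.
have HM2 : INR (blocks c N) <= 2 * Rpower (INR N) c by lra.
have := Rmult_le_compat_l (INR (N %/ blocks c N) + 1) _ _ ltac:(lra) HM2; lra.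
Qed.

Lemma eventually_rpow p B : 0 < p ->
  exists N1 : nat, forall N : nat, (N1 <= N)%N -> B <= Rpower (INR N) p /\ 1 <= INR N.
Proof.
move=> Hp.
set B' := Rpower (Rmax B 1) (/ p).
have [Hup _] := archimed B'.
have HB'0 : 0 < B' by exact: exp_pos.
have Hupge : (0 <= up B')%Z by apply: le_IZR; lra.
exists (Z.to_nat (up B')).+1 => N HN.
have HN' : INR (Z.to_nat (up B')).+1 <= INR N by exact: INR_le_ssr.
have HB' : B' <= INR N.
  by apply: Rle_trans HN'; rewrite S_INR INR_IZR_INZ Z2Nat.id //; lra.
split; last by apply: Rle_trans HN'; rewrite S_INR; have := pos_INR (Z.to_nat (up B')); lra.
apply: Rle_trans (Rmax_l B 1) _.
have -> : Rmax B 1 = Rpower B' p.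
  rewrite /B' Rpower_mult Rinv_l; last lra.
  by rewrite Rpower_1 //; have := Rmax_r B 1; lra.
by apply: Rle_Rpower_l; lra.
Qed.

Lemma exp_le x y : x <= y -> exp x <= exp y.
Proof. by case/Rle_lt_or_eq_dec => [/exp_increasing|->]; lra. Qed.

Lemma ln_ge0 x : 1 <= x -> 0 <= ln x.
Proof. by rewrite -ln_1; case/Rle_lt_or_eq_dec => [/ln_increasing|<-]; lra. Qed.

Lemma ln_le_id t : 0 < t -> ln t <= t.
Proof. by move=> Ht; have := exp_ineq1_le (ln t); rewrite exp_ln //; lra. Qed.

Lemma quad_bound A B q t : 0 <= A -> 0 <= B -> 0 < q -> 1 <= t ->
  (A + B) / q + 1 <= t -> A + B * t <= q * (t * t).
Proof.
move=> HA HB Hq Ht HT.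
have H1 : A + B <= q * (t - 1).
  have -> : A + B = ((A + B) / q) * q by field; lra.
  nra.
nra.
Qed.

Lemma poly_exp_dominated (a K : nat) q d : (0 < a)%N -> 0 < q -> 0 < d ->
  exists N1 : nat, forall N : nat, (N1 <= N)%N ->
    INR a * INR N ^ K * Rpower 2 (Rpower (INR N) d) <=
    Rpower 2 (q * (Rpower (INR N) d * Rpower (INR N) d)).
Proof.
move=> Ha Hq Hd.
have Hln2 : 0 < ln 2 by have := ln_lt_2; lra.
set A := ln (INR a); set B := INR K / d + ln 2; set q' := q * ln 2.
have HA : 0 <= A by apply: ln_ge0; apply: (INR_le_ssr Ha).
have HB : 0 <= B by rewrite /B; have := pos_INR K; have := Rinv_0_lt_compat d Hd; nra.
have Hq' : 0 < q' by rewrite /q'; nra.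
have [N1 HN1] := eventually_rpow (Rmax ((A + B) / q' + 1) 1) Hd.
exists N1 => N /HN1 [Ht HX]; set t := Rpower (INR N) d in Ht *.
have Ht1 := Rle_trans _ _ _ (Rmax_r _ _) Ht.
have HtT := Rle_trans _ _ _ (Rmax_l _ _) Ht.
have HXpos : 0 < INR N by lra.
have Hlnt : ln (INR N) = ln t / d by rewrite /t ln_Rpower; field; lra.
have EL : INR a * INR N ^ K * Rpower 2 t = exp (A + INR K * ln (INR N) + t * ln 2).
  have Ha' : 0 < INR a by apply: (lt_INR 0); apply/ltP.
  by rewrite !exp_plus /A exp_ln // -/(Rpower (INR N) (INR K)) Rpower_pow.
rewrite EL /Rpower; apply: exp_le.
have HKlnX : INR K * ln (INR N) <= INR K / d * t.
  have HKd : 0 <= INR K / d by have := pos_INR K; have := Rinv_0_lt_compat d Hd; nra.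
  have -> : INR K * ln (INR N) = INR K / d * ln t by rewrite Hlnt /Rdiv; ring.
  by apply: Rmult_le_compat_l => //; apply: ln_le_id; lra.
have := quad_bound HA HB Hq' Ht1 HtT; rewrite /B /q'; nra.
Qed.

Lemma block_length_power c eps N : 0 < c < 1 -> 0 < eps -> (0 < N)%N ->
  4 <= Rpower (INR N) (1 - c) ->
  Rpower (INR N) (1 - c) / 4 <= INR (N %/ blocks c N) /\
  Rpower 4 (- eps) * Rpower (INR N) ((1 - c) * eps) <= Rpower (INR (N %/ blocks c N)) eps.
Proof.
move=> Hc Heps HN HY.
have Hn : Rpower (INR N) (1 - c) / 4 <= INR (N %/ blocks c N).
  by have := block_length_lower Hc HN; lra.
split => //.
have HXpos : 0 < INR N by apply: (lt_INR 0); apply/ltP.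
apply: Rle_trans (Rle_Rpower_l _ _ _ (Rlt_le _ _ Heps) (conj _ Hn)); last lra.
rewrite /Rdiv -Rpower_mult_distr; [|exact: exp_pos|lra].
rewrite Rpower_mult Rmult_comm /Rpower ln_Rinv; last lra.
by apply: Req_le; congr (_ * exp _); ring.
Qed.

Definition transfer_exponent c eps : R := (1 - c) * eps / 2.

Lemma transfer_exponent_gt0 c eps : 0 < c < 1 -> 0 < eps -> 0 < transfer_exponent c eps.
Proof. by move=> Hc Heps; rewrite /transfer_exponent; nra. Qed.

(* A breaker of [concat_gen] with
   parameter [s] yields a breaker of [b_n] with parameter [S <= 3 N s +
   (k+1) N^(k+1)]; if the latter must be at least [2^(n^eps)], then [s] is at
   least [2^(N^((1-c) eps / 2))] for all large [N]. *)
Lemma transfer_bound c eps k N0 : 0 < c < 1 -> 0 < eps ->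
  exists N1 : nat, forall N : nat, (N1 <= N)%N ->
    (N0 <= N %/ blocks c N)%N /\ (0 < blocks c N)%N /\
    forall s S : nat, (S <= 3 * N * s + k.+1 * N ^ k.+1)%N ->
      Rpower (INR 2) (Rpower (INR (N %/ blocks c N)) eps) <= INR S ->
      Rpower (INR 2) (Rpower (INR N) (transfer_exponent c eps)) <= INR s.
Proof.
move=> Hc Heps; set d := transfer_exponent c eps.
have Hd : 0 < d by exact: transfer_exponent_gt0.
have E2 : INR 2 = 2 by rewrite /=; lra.
have [N1 HN1] := @eventually_rpow (1 - c) (Rmax 4 (4 * INR N0)) ltac:(lra).
have [N2 HN2] := @poly_exp_dominated (k + 4) k.+1 (Rpower 4 (- eps)) d ltac:(by rewrite addn4) (exp_pos _) Hd.
exists (maxn N1 N2) => N; rewrite geq_max => /andP [/HN1 [HY HX] /HN2 Hdom].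
have HN : (0 < N)%N by apply/ltP; apply: INR_lt; rewrite /=; lra.
have [Hn Hneps] := block_length_power Hc Heps HN (Rle_trans _ _ _ (Rmax_l _ _) HY).
split; first by apply/leP; apply: INR_le; have := Rmax_r 4 (4 * INR N0); lra.
split; first exact: blocks_gt0.
move=> s S HS HSlow; rewrite E2 in HSlow *.
set t := Rpower (INR N) d in Hdom *; set T := Rpower 2 t in Hdom *.
apply: Rnot_lt_le => Hs.
have HT : 1 <= T.
  by rewrite /T -(Rpower_O 2); [apply: Rle_Rpower; [lra|exact: Rlt_le (exp_pos _)]|lra].
have HXk : INR N <= INR N ^ k.+1.
  by have := Rle_pow (INR N) 1 k.+1 HX ltac:(apply/leP; done); rewrite pow_1.
have HXk1 : 1 <= INR N ^ k.+1 by lra.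
have HS' : INR S < INR (k + 4) * INR N ^ k.+1 * T.
  move/INR_le_ssr: HS; rewrite !(INR_addn, INR_muln, INR_expn) (S_INR k).
  have -> : INR 3 = 3 by rewrite /=; lra.
  have -> : INR 4 = 4 by rewrite /=; lra.
  set P := INR N ^ k.+1 in HXk HXk1 *.
  have Hk := pos_INR k; have Hs0 := pos_INR s.
  have H1 : 3 * INR N * INR s <= 3 * P * INR s by nra.
  have H2 : 3 * P * INR s < 3 * P * T by apply: Rmult_lt_compat_l; lra.
  have H3 : (INR k + 1) * P <= (INR k + 1) * P * T.
    by have := Rmult_le_compat_l ((INR k + 1) * P) 1 T ltac:(apply: Rmult_le_pos; lra) HT; lra.
  lra.
have Htt : t * t = Rpower (INR N) ((1 - c) * eps).
  by rewrite /t -Rpower_plus /d /transfer_exponent; congr Rpower; field.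
have : Rpower 2 (Rpower 4 (- eps) * (t * t)) <= Rpower 2 (Rpower (INR (N %/ blocks c N)) eps).
  by apply: Rle_Rpower; [lra|rewrite Htt].
lra.
Qed.

End Asymptotics.

Definition block_input (n j a : nat) : gate :=
  if a < n then GIn (j * n + a) else GConst false.

Fixpoint block_copies (n : nat) (Cg : seq gate) (i : nat) : seq gate :=
  if i is i'.+1 then block_copies n Cg i' ++ map (reloc (i' * size Cg) (block_input n i')) Cg
  else [::].

Lemma size_block_copies n Cg i : size (block_copies n Cg i) = i * size Cg.
Proof. by elim: i => [//|i IH] /=; rewrite size_cat size_map IH mulSn addnC. Qed.

Lemma eval_block_copiesS n Cg i x :
  eval_gates x (block_copies n Cg i.+1) =
  eval_gates x (block_copies n Cg i) ++ eval_gates (take n (drop (i * n) x)) Cg.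
Proof.
rewrite /= -(size_block_copies n Cg i); apply: eval_reloc => a vs; rewrite /block_input.
case: ifP => Ha /=.
- by rewrite nth_take // nth_drop.
- by rewrite nth_default // size_take; case: leqP => H; lia.
Qed.

Lemma nth_block_copies n Cg x i j o : j < i -> o < size Cg ->
  nth false (eval_gates x (block_copies n Cg i)) (j * size Cg + o) =
  nth false (eval_gates (take n (drop (j * n) x)) Cg) o.
Proof.
elim: i => [//|i IH] Hj Ho.
rewrite eval_block_copiesS nth_cat size_eval_gates size_block_copies.
case: (ltngtP j i) => Hji; last by subst j; rewrite ltnNge leq_addr /= addKn.
- have : j.+1 * size Cg <= i * size Cg by rewrite leq_mul2r Hji orbT.
  rewrite mulSn => H.
  have -> : j * size Cg + o < i * size Cg by lia.
  exact: IH.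
- lia.
Qed.

Lemma eval_input_copies x pre p q :
  eval_gates x (pre ++ [seq GIn (p + t) | t <- iota 0 q]) =
  eval_gates x pre ++ [seq nth false x (p + t) | t <- iota 0 q].
Proof.
elim: q => [|q IH]; first by rewrite /= !cats0.
rewrite -addn1 iotaD add0n !map_cat /= !cats1 -rcons_cat eval_gates_rcons IH.
by rewrite rcons_cat.
Qed.

Lemma drop_as_map (x : seq bool) p :
  drop p x = [seq nth false x (p + t) | t <- iota 0 (size x - p)].
Proof.
rewrite -{1}(mkseq_nth false (drop p x)) size_drop /mkseq.
by apply: eq_map => t; rewrite nth_drop.
Qed.

(* The circuit for [concat_gen] on inputs of length [N]: [m] copies of [C] on
   the blocks of length [n], followed by copies of the remaining [N - m * n]
   input bits, and a constant [false] wire for dangling outputs of [C]. *)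
Definition concat_circuit (n m N : nat) (C : mcircuit) : mcircuit :=
  let sC := size (mc_gates C) in
  let q := N - m * n in
  MCircuit (block_copies n (mc_gates C) m ++ [seq GIn (m * n + t) | t <- iota 0 q]
              ++ [:: GConst false])
    (flatten [seq [seq (if o < sC then j * sC + o else m * sC + q) | o <- mc_out C]
               | j <- iota 0 m]
       ++ [seq m * sC + t | t <- iota 0 q]).

Lemma size_concat_circuit n m N C :
  mc_size (concat_circuit n m N C) = m * size (mc_gates C) + (N - m * n) + 1.
Proof. by rewrite /mc_size /= !size_cat size_block_copies size_map size_iota addnA. Qed.

Lemma eval_concat_circuit (F : seq bool -> seq bool) n m N C x :
  (forall u, size u = n -> mc_eval C u = F u) -> m * n <= N -> size x = N ->
  mc_eval (concat_circuit n m N C) x =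
  flatten [seq F (take n (drop (i * n) x)) | i <- iota 0 m] ++ drop (m * n) x.
Proof.
move=> HF Hmn Hx.
rewrite /mc_eval /concat_circuit /=.
set sC := size (mc_gates C); set q := N - m * n.
set V := eval_gates x _.
set EB := eval_gates x (block_copies n (mc_gates C) m).
have EV : V = EB ++ [seq nth false x (m * n + t) | t <- iota 0 q] ++ [:: false].
  rewrite /V catA cats1 eval_gates_rcons eval_input_copies -cats1 -catA.
  by congr (_ ++ _ ++ _).
have HEB : size EB = m * sC by rewrite /EB size_eval_gates size_block_copies.
rewrite map_cat; congr (_ ++ _).
- rewrite map_flatten -map_comp; congr flatten; apply/eq_in_map => j.
  rewrite mem_iota add0n => /andP [_ Hj] /=.
  have Hsz : size (take n (drop (j * n) x)) = n.
    rewrite size_takel // size_drop Hx.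
    have : j.+1 * n <= m * n by rewrite leq_mul2r Hj orbT.
    rewrite mulSn; lia.
  rewrite -(HF _ Hsz) /mc_eval -map_comp; apply: eq_map => o /=.
  case: ifP => Ho.
  + rewrite EV nth_cat HEB.
    have : j.+1 * sC <= m * sC by rewrite leq_mul2r Hj orbT.
    rewrite mulSn => H.
    have -> : j * sC + o < m * sC by lia.
    exact: nth_block_copies.
  + rewrite EV nth_cat HEB ltnNge leq_addr /= addKn nth_cat size_map size_iota ltnn subnn /=.
    by rewrite nth_default // size_eval_gates leqNgt Ho.
- rewrite drop_as_map Hx -/q -map_comp; apply/eq_in_map => t.
  rewrite mem_iota add0n => /andP [_ Ht] /=.
  rewrite EV nth_cat HEB ltnNge leq_addr /= addKn nth_cat size_map size_iota Ht.
  by rewrite (nth_map 0) ?size_iota // nth_iota.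
Qed.

Lemma poly_bound a d : 0 < d -> exists K, forall N, a * N ^ d + 1 <= N ^ K + K.
Proof.
move=> Hd; exists (d.+1 + a ^ d.+1) => N.
case: (leqP N a) => HNa.
- have : a * N ^ d <= a ^ d.+1 by rewrite expnS leq_mul2l leq_exp2r ?HNa ?orbT.
  lia.
- have H1 : a * N ^ d <= N ^ d.+1 by rewrite expnS leq_mul2r (ltnW HNa) orbT.
  have H2 : N ^ d.+1 <= N ^ (d.+1 + a ^ d.+1) by apply: leq_pexp2l; lia.
  lia.
Qed.

Lemma poly_concat (b : bitfam) (c : R) : Rlt R0 c /\ Rlt c R1 ->
  poly_size_computable b -> poly_size_computable (concat_gen b c).
Proof.
move=> Hc [k Hk].
have [K HK] := poly_bound (k + 2) (ltn0Sn k).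
exists K => N.
set m := blocks c N; set n := N %/ m.
have [C [HCs HCe]] := Hk n.
exists (concat_circuit n m N C); split.
- rewrite size_concat_circuit.
  have Hm : m <= N by exact: blocks_le.
  have Hn : n <= N by exact: leq_div.
  have HsC : size (mc_gates C) <= N ^ k + k.
    apply: leq_trans HCs _; rewrite leq_add2r.
    by case: (k) => // k'; rewrite leq_exp2r.
  have := leq_mul Hm HsC; have := HK N.
  have : N <= N ^ k.+1 by case: (N) => // N'; rewrite expnS leq_pmulr ?expn_gt0.
  rewrite mulnDr -expnS; nia.
- move=> x; rewrite (@eval_concat_circuit (b n)) ?size_tuple //.
  + move=> u Hu; have Hu' : size u == n by rewrite Hu.
    exact: (HCe (Tuple Hu')).
  + by rewrite mulnC leq_divM.
Qed.

Section Breaking.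
Variables (b : bitfam) (n : nat) (C : mcircuit).
Hypothesis HC : forall u, size u = n -> mc_eval C u = b n u.
Hypothesis Hb : forall u, size u = n -> size (b n u) = n + 1.
Variables m r : nat.

(* [peel D j] reads the last [m - j] output blocks and the [r] copied bits,
   and guesses preimages for the first [j] blocks before running [D]. *)
Fixpoint peel (D : ndcircuit) (j : nat) : ndcircuit :=
  if j is j'.+1 then prepend n (n + 1) ((m - j'.+1) * (n + 1) + r) C (peel D j') else D.

Lemma size_peel D j : nd_size (peel D j) <= j * size (mc_gates C) + nd_size D.
Proof.
elim: j => [//|j IH] /=.
by apply: leq_trans (size_prepend _ _ _ _ _) _; rewrite mulSn -addnA leq_add2l.
Qed.

Lemma accepts_peelS D j z : size z = (m - j.+1) * (n + 1) + r ->
  nd_accepts (peel D j.+1) z = [exists x : n.-tuple bool, nd_accepts (peel D j) (b n x ++ z)].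
Proof.
move=> Hz; rewrite /= accepts_prepend //; last by move=> x; rewrite HC ?Hb ?size_tuple.
by apply: eq_existsb => x; rewrite HC ?size_tuple.
Qed.

Definition blocks_of_len (xs : seq (seq bool)) : bool := all (fun x => size x == n) xs.

Lemma peel_rejects D :
  (forall xs z, blocks_of_len xs -> size xs = m -> size z = r ->
     ~~ nd_accepts D (flatten (map (b n) xs) ++ z)) ->
  forall i, i <= m -> forall xs z, blocks_of_len xs -> size xs = m - i -> size z = r ->
     ~~ nd_accepts (peel D i) (flatten (map (b n) xs) ++ z).
Proof.
move=> Hrej; elim=> [|i IH] Hi xs z Hall Hxs Hz; first by apply: Hrej; rewrite // Hxs subn0.
have Hsz : size (flatten (map (b n) xs) ++ z) = (m - i.+1) * (n + 1) + r.
  rewrite size_cat (@size_flatten_const _ _ _ (n + 1)) ?Hxs ?Hz 1?mulnC //.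
  by move=> y /(allP Hall) /eqP /Hb.
rewrite accepts_peelS //; apply/existsP => -[x]; apply/negP.
have := IH (ltnW Hi) (val x :: xs) z; rewrite /= catA; apply; rewrite ?size_tuple //=; lia.
Qed.

Lemma hybrid_break D s L : L = m * (n + 1) + r -> 0 < m ->
  nd_size D <= s ->
  2 ^ L <= s * #|[set y : L.-tuple bool | nd_accepts D y]| ->
  (forall xs z, blocks_of_len xs -> size xs = m -> size z = r ->
     ~~ nd_accepts D (flatten (map (b n) xs) ++ z)) ->
  exists D', nd_size D' <= s + m * size (mc_gates C) /\
    2 ^ (n + 1) <= 2 * s * m * #|[set y : (n + 1).-tuple bool | nd_accepts D' y]| /\
    forall x : n.-tuple bool, ~~ nd_accepts D' (b n x).
Proof.
move=> -> Hm HDs Hacc Hrej.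
pose phi j u := nd_accepts (peel D j) u.
have Hlast z : size z = r -> phi m z = false.
  move=> Hz; apply/negbTE; rewrite /phi.
  exact: (peel_rejects Hrej (leqnn m) (isT : blocks_of_len [::]) (esym (subnn m)) Hz).
have Hfirst : 2 ^ (m * (n + 1) + r) <= s * cnt (m * (n + 1) + r) (fun u => phi 0 u).
  by rewrite -card_cnt.
have [j [Hj [z [Hz [Hpz Hcnt]]]]] := hybrid Hm Hlast Hfirst.
exists (restrict (n + 1) z (peel D j)); split; [|split].
- apply: leq_trans (size_restrict _ _ _) _; apply: leq_trans (size_peel _ _) _.
  by rewrite addnC leq_add // leq_mul2r ltnW ?orbT.
- by rewrite card_cnt (@eq_cnt _ _ (fun y => phi j (y ++ z))) // => u Hu; rewrite accepts_restrict.
- move=> x; rewrite accepts_restrict ?Hb ?size_tuple //; apply/negP => Hx.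
  by move: Hpz; rewrite /phi accepts_peelS // => /existsP; apply; exists x.
Qed.

End Breaking.

Lemma concat_break (b : bitfam) c N C D s :
  let m := blocks c N in let n := N %/ m in
  (forall u, size u = n -> mc_eval C u = b n u) ->
  (forall u, size u = n -> size (b n u) = n + 1) ->
  0 < m -> nd_size D <= s ->
  2 ^ (N + m) <= s * #|[set y : (N + m).-tuple bool | nd_accepts D y]| ->
  (forall x : N.-tuple bool, ~~ nd_accepts D (concat_gen b c N x)) ->
  exists D', nd_size D' <= s + m * size (mc_gates C) /\
    2 ^ (n + 1) <= 2 * s * m * #|[set y : (n + 1).-tuple bool | nd_accepts D' y]| /\
    forall x : n.-tuple bool, ~~ nd_accepts D' (b n x).
Proof.
move=> m n HC Hb Hm HDs Hacc Hrej.
have Hmn : m * n <= N by rewrite mulnC leq_divM.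
apply: (hybrid_break HC Hb (r := N - m * n)) Hm HDs Hacc _; first by lia.
move=> xs z Hall Hxs Hz.
have Hx : size (flatten xs ++ z) == N.
  rewrite size_cat -{1}(map_id xs) (@size_flatten_const _ _ _ n) ?Hxs ?Hz.
    by apply/eqP; lia.
  by move=> y /(allP Hall) /eqP.
by have := Hrej (Tuple Hx); rewrite /= (@concat_gen_blocks _ _ _ _ _ n).
Qed.

Lemma break_cost s m n N k : 0 < m <= N -> n <= N ->
  2 * s * m + s + m * (n ^ k + k) <= 3 * N * s + k.+1 * N ^ k.+1.
Proof.
move=> /andP [Hm HmN] HnN.
have HnkN : n ^ k <= N ^ k by case: (k) => // k'; rewrite leq_exp2r.
have HNk : N <= N ^ k.+1 by case: (N) => // N'; rewrite expnS leq_pmulr ?expn_gt0.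
have := leq_mul HmN HnkN; rewrite -expnS; nia.
Qed.

Theorem theorem4p1 (b : bitfam) (c : R) :
  Rlt R0 c /\ Rlt c R1 ->
  demibits (fun _ => 1%N) b ->
  demibits (blocks c) (concat_gen b c).
Proof.
move=> Hc [Hlen [Hpoly [eps [Heps [N0 Hdh]]]]].
have Hb n u : size u = n -> size (b n u) = n + 1.
  by move=> Hu; rewrite -(Hlen n (Tuple (introT eqP Hu))).
split; first by move=> N x; apply: size_concat_gen; [move=> u; apply: Hb|exact: size_tuple].
split; first exact: poly_concat.
have [k Hk] := Hpoly.
exists (transfer_exponent c eps); split; first exact: transfer_exponent_gt0.
have [N1 HN1] := transfer_bound k N0 Hc Heps.
exists N1 => N /HN1 [Hn0 [Hm Hfin]] s D HDs Hacc Hrej.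
set m := blocks c N in Hm Hacc Hrej Hfin *; set n := N %/ m in Hn0 Hfin *.
have [C [HCs HCe]] := Hk n.
have HC u : size u = n -> mc_eval C u = b n u by move=> Hu; exact: (HCe (Tuple (introT eqP Hu))).
have [D' [HD's [HD'acc HD'rej]]] := concat_break HC (Hb n) Hm HDs Hacc Hrej.
have HmN : 0 < m <= N by rewrite Hm blocks_le.
(* [D'] has size and inverse advantage at most [S = 2 s m + s + m (n^k + k)],
   so the demi-hardness of [b n] bounds [S] from below. *)
apply: (Hfin s _ (break_cost s k HmN (leq_div N m : n <= N))).
apply: (Hdh n Hn0 _ D') HD'rej.
- by apply: leq_trans HD's _; have := leq_mul (leqnn m) HCs; rewrite /mc_size; lia.
- by apply: leq_trans HD'acc _; rewrite leq_mul2r -addnA leq_addr orbT.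
Qed.
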